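(* If $X$ is a metric space with weak hyperbolic property C, then $X$ has straight finite decomposition complexity (i.e. the metric family $\{X\}$ has sFDC).
   Context: For $R>0$, a family $\mathcal U$ of nonempty subsets of a metric space is $R$-disjoint if $d(A,B)>R$ for all distinct $A,B\in\mathcal U$, where $d(A,B)=\inf\{d(a,b):a\in A,b\in B\}$. $B_r(x)$ denotes the open ball of radius $r$ about $x$. A subset $U\subset X$ is $(N,R)$-large scale doubling if for every $x\in X$ and every $r\ge R$, $B_{2r}(x)\cap U$ can be covered by $N$ balls of radius $r$ with centers in $X$. A family $\mathcal U$ of subsets of $X$ is weakly uniformly large scale doubling if there is $(N,R)$ such that each $U\in\mathcal U$ is $(N,R)$-large scale doubling. $X$ has weak hyperbolic property C if for every sequence $R_0,R_1,\dots$ of positive reals there exist $n\ge0$ and $R_i$-disjoint families $\mathcal U_i$ ($i=0,\dots,n$) such that $\bigcup_{i=0}^n\mathcal U_i$ is a weakly uniformly large scale doubling cover of $X$. A metric family is a collection of metric spaces (subsets carry the restricted metric); it is uniformly bounded if the supremum of diameters of its members is finite. For metric families $\mathcal X,\mathcal Y$ and $R>0$, $\mathcal X\xrightarrow{R}\mathcal Y$ means every $X\in\mathcal X$ satisfies $X=\bigcup(\mathcal U_1\cup\mathcal U_2)$ for some $R$-disjoint families $\mathcal U_1,\mathcal U_2$ with $\mathcal U_1\cup\mathcal U_2\subset\mathcal Y$. A metric family $\mathcal X$ has sFDC if for every sequence $R_0\le R_1\le\cdots$ of positive reals there exist $n\in\mathbb N$ and metric families $\mathcal U_0,\dots,\mathcal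 U_n$ with $\mathcal U_n$ uniformly bounded and $\mathcal X\xrightarrow{R_0}\mathcal U_0\xrightarrow{R_1}\cdots\xrightarrow{R_n}\mathcal U_n$. *)

From Stdlib Require Import Reals.
Open Scope R_scope.

Section MetricDefs.
Variables (X : Type) (d : X -> X -> R).

Definition is_metric : Prop :=
  (forall x y, 0 <= d x y) /\
  (forall x y, d x y = 0 <-> x = y) /\
  (forall x y, d x y = d y x) /\
  (forall x y z, d x z <= d x y + d y z).

Definition subset := X -> Prop.
Definition family := subset -> Prop.

Definition ball (x : X) (r : R) : subset := fun y => d x y < r.

Definition set_distinct (A B : subset) : Prop := ~ (forall x, A x <-> B x).

(* d(A,B) > Rr, where d(A,B) is the infimum of d(a,b): there is r > Rr
   with r <= d(a,b) for all a in A, b in B *)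
Definition set_dist_gt (Rr : R) (A B : subset) : Prop :=
  exists r, Rr < r /\ forall a b, A a -> B b -> r <= d a b.

Definition R_disjoint (Rr : R) (U : family) : Prop :=
  (forall A, U A -> exists x, A x) /\
  (forall A B, U A -> U B -> set_distinct A B -> set_dist_gt Rr A B).

Definition ls_doubling (N : nat) (Rr : R) (U : subset) : Prop :=
  forall (x : X) (r : R), Rr <= r ->
    exists c : nat -> X,
      forall y, ball x (2 * r) y -> U y ->
        exists i, (i < N)%nat /\ ball (c i) r y.

Definition weakly_unif_lsd (F : family) : Prop :=
  exists (N : nat) (Rr : R), 0 < Rr /\ forall U, F U -> ls_doubling N Rr U.

Definition weak_hyp_C : Prop :=
  forall Rs : nat -> R, (forall i, 0 < Rs i) ->
    exists (n : nat) (Us : nat -> family),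
      (forall i, (i <= n)%nat -> R_disjoint (Rs i) (Us i)) /\
      (forall x, exists i U, (i <= n)%nat /\ Us i U /\ U x) /\
      weakly_unif_lsd (fun U => exists i, (i <= n)%nat /\ Us i U).

Definition unif_bounded (F : family) : Prop :=
  exists D : R, forall A, F A -> forall x y, A x -> A y -> d x y <= D.

Definition decomposes (Rr : R) (Xf Yf : family) : Prop :=
  forall A, Xf A ->
    exists U1 U2 : family,
      R_disjoint Rr U1 /\ R_disjoint Rr U2 /\
      (forall B, U1 B \/ U2 B -> Yf B) /\
      (forall x, A x <-> exists B, (U1 B \/ U2 B) /\ B x).

Definition sFDC (Xf : family) : Prop :=
  forall Rs : nat -> R, (forall i, 0 < Rs i) -> (forall i, Rs i <= Rs (S i)) ->
    exists (n : nat) (Us : nat -> family),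
      unif_bounded (Us n) /\
      decomposes (Rs 0%nat) Xf (Us 0%nat) /\
      (forall i, (i < n)%nat -> decomposes (Rs (S i)) (Us i) (Us (S i))).

Definition whole_family : family := fun A => forall x, A x.

End MetricDefs.

From Pilot Require Import Defs.
From Stdlib Require Import Reals Lra Lia List ClassicalEpsilon.
From mathcomp Require classical_sets.
Open Scope R_scope.

(* Peel the cover given by weak hyperbolic property C off X one family at a
   time: at step i the traces of the R_i-disjoint family U_i on the part of X
   not yet covered are split off, and the uncovered rest is kept as a single
   piece.  After n+1 steps every piece lies in a member of a uniformly large
   scale doubling family.  Such a set P is cut into bounded pieces by
   repeatedly taking a maximal 8r-separated net of what is left of P and
   splitting off the 2r-balls around the net points, which are 4r-disjoint.
   A point surviving k rounds sees k net points, pairwise 2r apart, in its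
   8r-ball; large scale doubling allows at most N^3 of them, so N^3+1 rounds
   exhaust P. *)

Lemma ForallOrdPairs_filter {A} (Rl : A -> A -> Prop) (f : A -> bool) l :
  ForallOrdPairs Rl l -> ForallOrdPairs Rl (filter f l).
Proof.
induction 1 as [|a l Ha Hl IH]; simpl; [constructor|].
destruct (f a); [|exact IH]. constructor; [|exact IH].
rewrite Forall_forall in *. intros x Hx. apply filter_In in Hx. apply Ha, Hx.
Qed.

Lemma ForallOrdPairs_map_seq {A} (f : nat -> A) (Rl : A -> A -> Prop) : forall K s,
  (forall i j, (s <= i)%nat -> (i < j)%nat -> (j < s + K)%nat -> Rl (f i) (f j)) ->
  ForallOrdPairs Rl (map f (seq s K)).
Proof.
induction K as [|K IH]; intros s H; simpl; [constructor|].
constructor.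
- apply Forall_forall. intros x Hx. apply in_map_iff in Hx. destruct Hx as [j [<- Hj]].
  apply in_seq in Hj. apply H; lia.
- apply IH. intros i j h1 h2 h3. apply H; lia.
Qed.

Lemma filter_filter_length_le {A} (f h : A -> bool) l :
  (length (filter f (filter h l)) <= length (filter f l))%nat.
Proof.
induction l as [|a l IH]; simpl; [lia|].
destruct (h a); simpl; destruct (f a); simpl; lia.
Qed.

Lemma length_le_classes {A} (g : A -> nat) (M : nat) : forall k l,
  (forall z, In z l -> (g z < k)%nat) ->
  (forall i, (length (filter (fun z => Nat.eqb (g z) i) l) <= M)%nat) ->
  (length l <= k * M)%nat.
Proof.
induction k as [|k IH]; intros l Hl Hc.
- destruct l as [|a l]; simpl; [lia|]. specialize (Hl a (or_introl eq_refl)). lia.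
- rewrite <- (filter_length (fun z => Nat.eqb (g z) k) l).
  assert (Hrest : (length (filter (fun z => negb (Nat.eqb (g z) k)) l) <= k * M)%nat).
  { apply IH.
    - intros z Hz. apply filter_In in Hz. destruct Hz as [Hz Hn].
      specialize (Hl z Hz). apply Bool.negb_true_iff, Nat.eqb_neq in Hn. lia.
    - intros i. eapply Nat.le_trans; [apply filter_filter_length_le|apply Hc]. }
  specialize (Hc k). simpl. lia.
Qed.

Section Decompositions.
Variables (X : Type) (d : X -> X -> R).

Definition splits (Rr : R) (A : Defs.subset X) (Yf : Defs.family X) : Prop :=
  exists U1 U2 : Defs.family X,
    R_disjoint X d Rr U1 /\ R_disjoint X d Rr U2 /\
    (forall B, U1 B \/ U2 B -> Yf B) /\
    (forall x, A x <-> exists B, (U1 B \/ U2 B) /\ B x).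

Lemma splits_peel Rr (A Y : Defs.subset X) (G Yf : Defs.family X) :
  R_disjoint X d Rr G -> (forall B, G B -> Yf B) -> ((exists x, Y x) -> Yf Y) ->
  (forall x, A x <-> (exists B, G B /\ B x) \/ Y x) ->
  splits Rr A Yf.
Proof.
intros HG GY YY HA.
exists G, (fun B => B = Y /\ exists x, Y x). split; [exact HG|split; [split|split]].
- intros B [-> Hx]. exact Hx.
- intros B B' [-> _] [-> _] hd. exfalso. apply hd. intro; tauto.
- intros B [HB|[-> Hx]]; [exact (GY B HB)|exact (YY Hx)].
- intros x. rewrite HA. split.
  + intros [[B [HB Bx]]|Yx]; [exists B; tauto|].
    exists Y. split; [right; split; [reflexivity|exists x; exact Yx]|exact Yx].
  + intros [B [[HB|[-> _]] Bx]]; [left; exists B; tauto|right; exact Bx].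
Qed.

Lemma splits_self Rr (A : Defs.subset X) (Yf : Defs.family X) :
  ((exists x, A x) -> Yf A) -> splits Rr A Yf.
Proof.
intros H. apply (splits_peel Rr A A (fun _ => False) Yf).
- split; [intros B []|intros B B' []].
- intros B [].
- exact H.
- intros x. split; [tauto|intros [[B [[] _]]|h]; exact h].
Qed.

Definition chain (Rs : nat -> R) (Us : nat -> Defs.family X) (n : nat) : Prop :=
  forall i, (i < n)%nat -> decomposes X d (Rs (S i)) (Us i) (Us (S i)).

Definition glue (n : nat) (Us Ws : nat -> Defs.family X) (i : nat) : Defs.family X :=
  if Nat.leb i n then Us i else Ws (i - n)%nat.

Lemma chain_glue Rs Us Ws n m :
  chain Rs Us n -> chain (fun i => Rs (n + i)%nat) Ws m ->
  (forall B, Us n B -> Ws 0%nat B) ->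
  chain Rs (glue n Us Ws) (n + m).
Proof.
intros HU HW H0 i hi. unfold glue.
destruct (Nat.leb_spec (S i) n) as [hlt|hge].
- rewrite (proj2 (Nat.leb_le i n)) by lia. apply HU, hlt.
- destruct (Nat.leb_spec i n) as [hle|hgt].
  + replace i with n by lia. replace (S n - n)%nat with 1%nat by lia.
    intros A HA. rewrite <- Nat.add_1_r. apply (HW 0%nat); [lia|apply H0, HA].
  + replace (S i - n)%nat with (S (i - n)) by lia.
    replace (S i) with (n + S (i - n))%nat by lia. apply HW. lia.
Qed.

Lemma ls_doubling_sub N Rr (U V : Defs.subset X) :
  ls_doubling X d N Rr U -> (forall x, V x -> U x) -> ls_doubling X d N Rr V.
Proof.
intros HU HVU x r hr. destruct (HU x r hr) as [c Hc].
exists c. intros y By Vy. exact (Hc y By (HVU y Vy)).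
Qed.

End Decompositions.

Section Peeling.
Variables (X : Type) (d : X -> X -> R) (V : nat -> Defs.family X) (n : nat).
Hypothesis V_cover : forall x, exists j W, (j <= n)%nat /\ V j W /\ W x.

Fixpoint uncovered (j : nat) : Defs.subset X :=
  match j with
  | O => fun _ => True
  | S j => fun x => uncovered j x /\ ~ (exists W, V j W /\ W x)
  end.

Definition traces (j : nat) : Defs.family X :=
  fun B => (exists x, B x) /\ exists W, V j W /\ B = (fun x => W x /\ uncovered j x).

Definition peel_stage (i : nat) : Defs.family X :=
  fun B => (exists j, (j <= i)%nat /\ traces j B) \/
           ((i < n)%nat /\ B = uncovered (S i) /\ exists x, uncovered (S i) x).

Lemma uncovered_not_covered m x :
  uncovered m x -> forall j, (j < m)%nat -> ~ (exists W, V j W /\ W x).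
Proof.
revert x. induction m as [|m IH]; intros x Hx j Hj; [lia|].
destruct Hx as [Hx Hn]. destruct (Nat.eq_dec j m) as [->|hne]; [exact Hn|].
apply (IH x Hx). lia.
Qed.

Lemma traces_R_disjoint j Rr : R_disjoint X d Rr (V j) -> R_disjoint X d Rr (traces j).
Proof.
intros [Hne Hd]. split.
- intros B [Hx _]. exact Hx.
- intros B B' [_ [W [VW ->]]] [_ [W' [VW' ->]]] hd.
  assert (hWW : set_distinct X W W').
  { intros heq. apply hd. intros x. rewrite (heq x). tauto. }
  destruct (Hd W W' VW VW' hWW) as [r [hr Hr]]. exists r. split; [exact hr|].
  intros a b [Wa _] [Wb _]. exact (Hr a b Wa Wb).
Qed.

Lemma uncovered_splits Rr i (A : Defs.subset X) :
  R_disjoint X d Rr (V i) -> (i <= n)%nat -> (forall x, A x <-> uncovered i x) ->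
  splits X d Rr A (peel_stage i).
Proof.
intros Hd Hi HA.
apply (splits_peel X d Rr A (uncovered (S i)) (traces i)).
- apply traces_R_disjoint, Hd.
- intros B HB. left. exists i. split; [lia|exact HB].
- intros [x Hx]. right. split; [|split; [reflexivity|exists x; exact Hx]].
  destruct (Nat.eq_dec i n) as [->|hne]; [|lia].
  exfalso. destruct (V_cover x) as [j [W [hj [VW Wx]]]].
  apply (uncovered_not_covered (S n) x Hx j); [lia|]. exists W. tauto.
- intros x. rewrite HA. split.
  + intros Yx. destruct (Classical_Prop.classic (exists W, V i W /\ W x)) as [[W [VW Wx]]|hn].
    * left. exists (fun x => W x /\ uncovered i x).
      split; [split; [exists x; tauto|exists W; tauto]|tauto].
    * right. simpl. tauto.
  + intros [[B [[_ [W [_ ->]]] Bx]]|Yx]; [exact (proj2 Bx)|exact (proj1 Yx)].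
Qed.

Variable Rs : nat -> R.
Hypothesis V_disj : forall i, (i <= n)%nat -> R_disjoint X d (Rs i) (V i).

Lemma peel_stage_first : decomposes X d (Rs 0%nat) (whole_family X) (peel_stage 0).
Proof.
intros A HA. apply uncovered_splits; [apply V_disj; lia|lia|].
intros x. split; [intros; exact I|intros _; apply HA].
Qed.

Lemma peel_stage_chain : chain X d Rs peel_stage n.
Proof.
intros i hi A [[j [hj HB]]|[_ [-> _]]].
- apply splits_self. intros _. left. exists j. split; [lia|exact HB].
- apply uncovered_splits; [apply V_disj; lia|lia|tauto].
Qed.

Lemma peel_stage_last B : peel_stage n B ->
  (exists x, B x) /\ exists j W, (j <= n)%nat /\ V j W /\ forall x, B x -> W x.
Proof.
intros [[j [hj [hx [W [VW ->]]]]]|[h _]]; [|lia].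
split; [exact hx|]. exists j, W. split; [exact hj|split; [exact VW|]].
intros x [Wx _]. exact Wx.
Qed.

End Peeling.

Section Nets.
Variables (X : Type) (d : X -> X -> R).
Hypothesis Hm : is_metric X d.

Definition is_net (a : R) (S Z : Defs.subset X) : Prop :=
  (forall z, Z z -> S z) /\
  (forall z z', Z z -> Z z' -> z <> z' -> a <= d z z') /\
  (forall y, S y -> exists z, Z z /\ d y z < a).

(* By Zorn's lemma there is a maximal a-separated subset of S; maximality makes it a-dense. *)
Lemma net_exists (a : R) (S : Defs.subset X) : 0 < a -> exists Z, is_net a S Z.
Proof.
destruct Hm as [_ [d0 [dsym _]]]. intros ha.
pose (P := fun A : Defs.subset X => (forall z, A z -> S z) /\
    (forall z z', A z -> A z' -> z <> z' -> a <= d z z')).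
destruct (@classical_sets.Zorn_bigcup X P) as [A [PA Amax]].
- intros F FP Ftot. split.
  + intros z [B FB Bz]. exact (proj1 (FP B FB) z Bz).
  + intros z z' [B FB Bz] [B' FB' Bz'] hne.
    destruct (Ftot B B' FB FB') as [h|h].
    * exact (proj2 (FP B' FB') z z' (h z Bz) Bz' hne).
    * exact (proj2 (FP B FB) z z' Bz (h z' Bz') hne).
- exists A. split; [exact (proj1 PA)|split; [exact (proj2 PA)|]].
  intros y Sy. apply Classical_Prop.NNPP. intro hn.
  assert (far : forall z, A z -> a <= d y z).
  { intros z Az. destruct (Rlt_le_dec (d y z) a) as [h|h]; [|exact h].
    exfalso; apply hn; exists z; now split. }
  apply (Amax (fun x => A x \/ x = y)).
  + split.
    * intros t At. now left.
    * intro hsub. apply hn. exists y.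
      split; [exact (hsub y (or_intror eq_refl))|rewrite (proj2 (d0 y y) eq_refl); exact ha].
  + split.
    * intros z [Az|Hz]; [exact (proj1 PA z Az)|subst; exact Sy].
    * intros z z' [Az|Hz] [Az'|Hz'] hne.
      -- exact (proj2 PA z z' Az Az' hne).
      -- subst. rewrite dsym. exact (far z Az).
      -- subst. exact (far z' Az').
      -- subst. now elim hne.
Qed.

(* Induction on k: the 2^(k+1) r0-ball is covered by N balls of radius
   2^k r0, and each of them contains at most N^k points of the list. *)
Lemma ls_doubling_packing (U : Defs.subset X) N rho r0 delta :
  ls_doubling X d N rho U -> 0 < rho -> rho <= r0 -> 2 * r0 <= delta ->
  forall k x (l : list X),
  (forall z, In z l -> U z /\ ball X d x (2 ^ k * r0) z) ->
  ForallOrdPairs (fun u v => delta <= d u v) l -> (length l <= N ^ k)%nat.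
Proof.
destruct Hm as [_ [_ [dsym dtri]]]. intros HU hrho hr0 hdel.
induction k as [|k IH]; intros x l Hl Hs.
- destruct l as [|u [|v l]]; simpl; try lia. exfalso.
  inversion Hs as [|a l' Ha Hl' E]; subst.
  inversion Ha as [|b l'' Hb]; subst.
  destruct (Hl u (or_introl eq_refl)) as [_ Bu].
  destruct (Hl v (or_intror (or_introl eq_refl))) as [_ Bv].
  unfold ball in *. specialize (dtri u x v). rewrite (dsym u x) in dtri. lra.
- assert (hr : rho <= 2 ^ k * r0) by (assert (1 <= 2 ^ k) by (apply pow_R1_Rle; lra); nra).
  set (r := 2 ^ k * r0) in *.
  destruct (HU x r hr) as [c Hc].
  destruct (choice (fun (z : X) (i : nat) => (ball X d x (2 * r) z /\ U z) ->
      (i < N)%nat /\ ball X d (c i) r z)) as [g Hg].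
  { intros z. destruct (excluded_middle_informative (ball X d x (2 * r) z /\ U z)) as [h|h].
    - destruct (Hc z (proj1 h) (proj2 h)) as [i Hi]. exists i. intros _. exact Hi.
    - exists 0%nat. intros h'. contradiction. }
  assert (Hl' : forall z, In z l -> U z /\ ball X d x (2 * r) z).
  { intros z Hz. destruct (Hl z Hz) as [Uz Bz]. split; [exact Uz|]. simpl in Bz. rewrite Rmult_assoc in Bz. exact Bz. }
  rewrite Nat.pow_succ_r'. apply (length_le_classes g).
  + intros z Hz. destruct (Hl' z Hz) as [Uz Bz]. apply (Hg z). split; assumption.
  + intros i. apply (IH (c i)); [|apply ForallOrdPairs_filter, Hs].
    intros z Hz. apply filter_In in Hz. destruct Hz as [Hz Hi].
    apply Nat.eqb_eq in Hi. destruct (Hl' z Hz) as [Uz Bz]. split; [exact Uz|].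
    rewrite <- Hi. apply (Hg z). split; assumption.
Qed.

Section NetPeeling.
Variables (Zs : Defs.subset X -> Defs.subset X) (r : R).
Hypothesis Zs_net : forall S, is_net (8 * r) S (Zs S).

Fixpoint residue (P : Defs.subset X) (j : nat) : Defs.subset X :=
  match j with
  | O => P
  | S j => fun x => residue P j x /\ ~ (exists z, Zs (residue P j) z /\ d z x < 2 * r)
  end.

Definition net_piece (P : Defs.subset X) (j : nat) (z : X) : Defs.subset X :=
  fun x => residue P j x /\ d z x < 2 * r.

Definition net_stage (F : Defs.family X) (k : nat) : Defs.family X :=
  fun B => exists P, F P /\
    ((exists j z, (j < k)%nat /\ Zs (residue P j) z /\ B = net_piece P j z /\ exists x, B x) \/
     (B = residue P k /\ exists x, residue P k x)).

Lemma residue_antitone P j j' x : (j <= j')%nat -> residue P j' x -> residue P j x.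
Proof.
intros H. induction H as [|j' H IH]; [tauto|]. intros [h _]. exact (IH h).
Qed.

(* Pieces around distinct net points are 4r apart, since the points are 8r apart. *)
Lemma net_stage_step (F : Defs.family X) Rr k :
  Rr < 4 * r -> decomposes X d Rr (net_stage F k) (net_stage F (S k)).
Proof.
destruct Hm as [_ [_ [dsym dtri]]].
intros hR A [P [FP [[j [z [hj [Zz [-> hne]]]]]|[-> hne]]]].
- apply splits_self. intros _. exists P. split; [exact FP|left].
  exists j, z. repeat split; try tauto. lia.
- apply (splits_peel X d Rr (residue P k) (residue P (S k))
    (fun B => exists z, Zs (residue P k) z /\ B = net_piece P k z /\ exists x, B x)).
  + split.
    * intros B [z [_ [_ h]]]. exact h.
    * intros B B' [z [Zz [-> _]]] [z' [Zz' [-> _]]] hd.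
      assert (hzz : z <> z') by (intros ->; apply hd; tauto).
      pose proof (proj1 (proj2 (Zs_net (residue P k))) z z' Zz Zz' hzz).
      exists (4 * r). split; [exact hR|].
      intros u v [_ hu] [_ hv].
      pose proof (dtri z u z'). pose proof (dtri u v z'). rewrite (dsym v z') in *. lra.
  + intros B [z [Zz [-> hx]]]. exists P. split; [exact FP|left].
    exists k, z. repeat split; try tauto. lia.
  + intros hx. exists P. split; [exact FP|right]. split; [reflexivity|exact hx].
  + intros x. split.
    * intros hx.
      destruct (Classical_Prop.classic (exists z, Zs (residue P k) z /\ d z x < 2 * r))
        as [[z [Zz hz]]|hn].
      -- left. exists (net_piece P k z).
         split; [exists z; split; [exact Zz|split; [reflexivity|exists x; split; assumption]]|].
         split; assumption.
      -- right. simpl. tauto.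
    * intros [[B [[z [_ [-> _]]] Bx]]|Yx]; [exact (proj1 Bx)|exact (proj1 Yx)].
Qed.

(* A point y surviving K rounds has in each round i < K a net point z_i within
   8r = 2^3 r of y, and z_j (j > i) survived round i, so d z_i z_j >= 2r;
   packing then gives K <= N^3. *)
Lemma residue_exhausted (P : Defs.subset X) N rho y :
  ls_doubling X d N rho P -> 0 < rho -> rho <= r -> ~ residue P (S (N ^ 3)) y.
Proof.
intros HP hrho hr Hy. set (K := S (N ^ 3)) in *.
destruct (choice (fun (j : nat) (z : X) =>
    (j < K)%nat -> Zs (residue P j) z /\ d y z < 8 * r)) as [zf Hzf].
{ intros j. destruct (Compare_dec.lt_dec j K) as [hj|hj].
  - destruct (proj2 (proj2 (Zs_net (residue P j))) y) as [z Hz];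
      [apply (residue_antitone P j K); [lia|exact Hy]|].
    exists z. intros _. exact Hz.
  - exists y. intros h. contradiction. }
assert (Zs_sub : forall S z, Zs S z -> S z) by (intros S; exact (proj1 (Zs_net S))).
enough (K <= N ^ 3)%nat by lia.
rewrite <- (length_seq K 0), <- (length_map zf).
apply (ls_doubling_packing P N rho r (2 * r) HP hrho hr ltac:(lra) 3 y).
- intros z Hz. apply in_map_iff in Hz. destruct Hz as [j [<- Hj]]. apply in_seq in Hj.
  destruct (Hzf j ltac:(lia)) as [Zz dz]. split.
  + apply (residue_antitone P 0 j); [lia|]. apply Zs_sub, Zz.
  + unfold ball. simpl. lra.
- apply ForallOrdPairs_map_seq. intros i j _ hij hj.
  destruct (Hzf j ltac:(lia)) as [Zj _]. destruct (Hzf i ltac:(lia)) as [Zi _].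
  assert (Hr : residue P (S i) (zf j))
    by (apply (residue_antitone P (S i) j); [lia|apply Zs_sub, Zj]).
  destruct Hr as [_ Hn]. destruct (Rlt_le_dec (d (zf i) (zf j)) (2 * r)) as [h|h]; [|exact h].
  exfalso. apply Hn. exists (zf i). split; assumption.
Qed.

Lemma net_stage_bounded (F : Defs.family X) N rho :
  (forall P, F P -> ls_doubling X d N rho P) -> 0 < rho -> rho <= r ->
  unif_bounded X d (net_stage F (S (N ^ 3))).
Proof.
destruct Hm as [_ [_ [dsym dtri]]]. intros HF hrho hr.
exists (4 * r). intros B [P [FP [[j [z [_ [_ [-> _]]]]]|[-> [y hy]]]]].
- intros x y [_ hx] [_ hy]. pose proof (dtri x z y). rewrite (dsym x z) in *. lra.
- exfalso. exact (residue_exhausted P N rho y (HF P FP) hrho hr hy).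
Qed.

End NetPeeling.

Lemma ls_doubling_bounded_chain (F : Defs.family X) N rho T : 0 < rho ->
  (forall P, F P -> ls_doubling X d N rho P) ->
  exists Ws : nat -> Defs.family X,
    (forall P, F P -> (exists x, P x) -> Ws 0%nat P) /\
    (forall k Rr, Rr <= T -> decomposes X d Rr (Ws k) (Ws (S k))) /\
    unif_bounded X d (Ws (S (N ^ 3))).
Proof.
intros hrho HF. set (r := Rmax rho T).
assert (hr : rho <= r) by apply Rmax_l. assert (hT : T <= r) by apply Rmax_r.
destruct (choice (fun S Z => is_net (8 * r) S Z)) as [Zs Zs_net].
{ intros S. apply net_exists. lra. }
exists (net_stage Zs r F). split; [|split].
- intros P FP hx. exists P. split; [exact FP|right]. split; [reflexivity|exact hx].
- intros k Rr hRr. apply net_stage_step; [exact Zs_net|lra].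
- exact (net_stage_bounded Zs r Zs_net F N rho HF hrho hr).
Qed.

End Nets.

Theorem theorem4p5 (X : Type) (d : X -> X -> R) :
  is_metric X d -> weak_hyp_C X d -> sFDC X d (whole_family X).
Proof.
intros Hm HC Rs Rs_pos Rs_mono.
destruct (HC Rs Rs_pos) as [n [V [V_disj [V_cover [N [rho [rho_pos V_lsd]]]]]]].
set (K := S (N ^ 3)).
assert (last_lsd : forall P, peel_stage X V n n P -> ls_doubling X d N rho P).
{ intros P HP. destruct (peel_stage_last X V n P HP) as [_ [j [W [hj [VW PW]]]]].
  apply (ls_doubling_sub X d N rho W); [apply V_lsd; exists j; tauto|exact PW]. }
destruct (ls_doubling_bounded_chain X d Hm _ N rho (Rs (n + K)%nat) rho_pos last_lsd)
  as [Ws [W0 [W_step W_bounded]]].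
exists (n + K)%nat, (glue X n (peel_stage X V n) Ws). split; [|split].
- unfold glue. rewrite (proj2 (Nat.leb_gt (n + K) n)) by (unfold K; lia).
  replace (n + K - n)%nat with K by lia. exact W_bounded.
- exact (peel_stage_first X d V n V_cover Rs V_disj).
- apply chain_glue.
  + exact (peel_stage_chain X d V n V_cover Rs V_disj).
  + intros i hi. apply W_step, tech9; [exact Rs_mono|lia].
  + intros B HB. apply W0; [exact HB|exact (proj1 (peel_stage_last X V n B HB))].
Qed.
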